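(* Let $\mathbb{C},\mathbb{D}$ be squares categories and $F,G:\mathbb{C}\to\mathbb{D}$ functors of squares categories. The components of any vertical natural transformation $\eta:F\Rightarrow G$ are vertical weak equivalences in $\mathbb{D}$, and the components of any horizontal natural transformation $\eta:F\Rightarrow G$ are horizontal weak equivalences in $\mathbb{D}$.
   Context: A squares category is a flat double category (squares uniquely determined by their boundary; we say a boundary ''is a square'') with a distinguished object $O$ initial in the horizontal category (morphisms $\rightarrowtail$) and terminal in the vertical category (morphisms $\twoheadrightarrow$); a functor of squares categories is a double functor preserving $O$. A vertical $f:A\twoheadrightarrow B$ is a vertical weak equivalence if the boundary (top $O\rightarrowtail A$, left $\mathrm{id}_O$, right $f$, bottom $O\rightarrowtail B$) is a square; a horizontal $g:A\rightarrowtail B$ is a horizontal weak equivalence if the boundary (top $g$, left $A\twoheadrightarrow O$, right $B\twoheadrightarrow O$, bottom $\mathrm{id}_O$) is a square. A vertical natural transformation $\eta:F\Rightarrow G$ consists of vertical morphisms $\eta_A:F(A)\twoheadrightarrow G(A)$ such that for every horizontal $f:A\rightarrowtail A'$ the boundary with top $Ff$, left $\eta_A$, right $\eta_{A'}$, bottom $Gf$ is a square, and for every vertical $u:A\twoheadrightarrow A'$, $\eta_{A'}\circ Fu=Gu\circ\eta_A$. Dually, a horizontal natural transformation consists of horizontal morphisms $\eta_A:F(A)\rightarrowtail G(A)$ such that for every vertical $u:A\twoheadrightarrow A'$ the boundary with top $\eta_A$, left $Fu$, right $Gu$, bottom $\eta_{A'}$ is a square, and $\eta_{A'}\circ Ff=Gf\circ\eta_A$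 for every horizontal $f$. *)

Set Implicit Arguments.
Unset Strict Implicit.

(* Composition is written applicatively: comp g f = g o f. *)
Record SquaresCat := {
  ob : Type;
  hom_h : ob -> ob -> Type;
  hom_v : ob -> ob -> Type;
  hid : forall A, hom_h A A;
  hcomp : forall A B C, hom_h B C -> hom_h A B -> hom_h A C;
  hcomp_id_l : forall A B (f : hom_h A B), hcomp (hid B) f = f;
  hcomp_id_r : forall A B (f : hom_h A B), hcomp f (hid A) = f;
  hcomp_assoc : forall A B C D (f : hom_h A B) (g : hom_h B C) (h : hom_h C D),
      hcomp h (hcomp g f) = hcomp (hcomp h g) f;
  vid : forall A, hom_v A A;
  vcomp : forall A B C, hom_v B C -> hom_v A B -> hom_v A C;
  vcomp_id_l : forall A B (f : hom_v A B), vcomp (vid B) f = f;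
  vcomp_id_r : forall A B (f : hom_v A B), vcomp f (vid A) = f;
  vcomp_assoc : forall A B C D (f : hom_v A B) (g : hom_v B C) (h : hom_v C D),
      vcomp h (vcomp g f) = vcomp (vcomp h g) f;
  (* flatness: a boundary (top, left, right, bottom) either is a square or not *)
  sq : forall A B C D, hom_h A B -> hom_v A C -> hom_v B D -> hom_h C D -> Prop;
  sq_hid : forall A C (u : hom_v A C), sq (hid A) u u (hid C);
  sq_vid : forall A B (f : hom_h A B), sq f (vid A) (vid B) f;
  sq_hcomp : forall A B E C D F (f : hom_h A B) (g : hom_h B E)
      (u : hom_v A C) (v : hom_v B D) (w : hom_v E F)
      (f' : hom_h C D) (g' : hom_h D F),
      sq f u v f' -> sq g v w g' -> sq (hcomp g f) u w (hcomp g' f');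
  sq_vcomp : forall A B C D E F (f : hom_h A B) (u : hom_v A C) (v : hom_v B D)
      (g : hom_h C D) (u' : hom_v C E) (v' : hom_v D F) (k : hom_h E F),
      sq f u v g -> sq g u' v' k -> sq f (vcomp u' u) (vcomp v' v) k;
  O : ob;
  hO : forall A, hom_h O A;
  hO_uniq : forall A (f : hom_h O A), f = hO A;
  vO : forall A, hom_v A O;
  vO_uniq : forall A (f : hom_v A O), f = vO A
}.

Arguments hom_h {s}.
Arguments hom_v {s}.
Arguments hid {s}.
Arguments hcomp {s A B C}.
Arguments vid {s}.
Arguments vcomp {s A B C}.
Arguments sq {s A B C D}.
Arguments O {s}.
Arguments hO {s}.
Arguments vO {s}.

Record SqFunctor (C D : SquaresCat) := {
  fob : ob C -> ob D;
  fh : forall A B, hom_h A B -> hom_h (fob A) (fob B);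
  fv : forall A B, hom_v A B -> hom_v (fob A) (fob B);
  fh_id : forall A, fh (hid A) = hid (fob A);
  fh_comp : forall A B E (f : hom_h A B) (g : hom_h B E),
      fh (hcomp g f) = hcomp (fh g) (fh f);
  fv_id : forall A, fv (vid A) = vid (fob A);
  fv_comp : forall A B E (f : hom_v A B) (g : hom_v B E),
      fv (vcomp g f) = vcomp (fv g) (fv f);
  fsq : forall A B C' D' (f : hom_h A B) (u : hom_v A C') (v : hom_v B D')
      (g : hom_h C' D'), sq f u v g -> sq (fh f) (fv u) (fv v) (fh g);
  fO : fob O = O
}.

Arguments fob {C D}.
Arguments fh {C D} s {A B}.
Arguments fv {C D} s {A B}.

Definition vert_weq (D : SquaresCat) (A B : ob D) (f : hom_v A B) : Prop :=
  sq (hO A) (vid O) f (hO B).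

Definition horiz_weq (D : SquaresCat) (A B : ob D) (g : hom_h A B) : Prop :=
  sq g (vO A) (vO B) (hid O).

Definition vert_nat (C D : SquaresCat) (F G : SqFunctor C D)
    (eta : forall A, hom_v (fob F A) (fob G A)) : Prop :=
  (forall A A' (f : hom_h A A'), sq (fh F f) (eta A) (eta A') (fh G f)) /\
  (forall A A' (u : hom_v A A'), vcomp (eta A') (fv F u) = vcomp (fv G u) (eta A)).

Definition horiz_nat (C D : SquaresCat) (F G : SqFunctor C D)
    (eta : forall A, hom_h (fob F A) (fob G A)) : Prop :=
  (forall A A' (u : hom_v A A'), sq (eta A) (fv F u) (fv G u) (eta A')) /\
  (forall A A' (f : hom_h A A'), hcomp (eta A') (fh F f) = hcomp (fh G f) (eta A)).

Arguments vert_weq {D A B}.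
Arguments horiz_weq {D A B}.
Arguments vert_nat {C D} F G eta.
Arguments horiz_nat {C D} F G eta.


(* The naturality square of [eta] at the unique horizontal morphism [O >-> A]
   has top and bottom out of [F O = O] and [G O = O], hence uniquely
   determined, and left side a vertical endomorphism of [O], hence the
   identity: it is exactly the square defining [eta A] as a vertical weak
   equivalence.  Dually for horizontal transformations, using the unique
   vertical morphism [A ->> O]. *)

(* The equations [X = O], [Y = O] let the lemma apply at [fob F O], which is
   only propositionally equal to [O]. *)
Lemma vert_weq_of_sq_from_O {D : SquaresCat} {X Y A B : ob D}
    (eX : X = O) (eY : Y = O)
    {h : hom_h X A} {u : hom_v X Y} {f : hom_v A B} {k : hom_h Y B} :
  sq h u f k -> vert_weq f.
Proof.
  subst X Y.
  rewrite (hO_uniq h), (hO_uniq k), (vO_uniq u); unfold vert_weq.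
  now rewrite (vO_uniq (vid O)).
Qed.

Lemma horiz_weq_of_sq_to_O {D : SquaresCat} {X Y A B : ob D}
    (eX : X = O) (eY : Y = O)
    {g : hom_h A B} {u : hom_v A X} {v : hom_v B Y} {k : hom_h X Y} :
  sq g u v k -> horiz_weq g.
Proof.
  subst X Y.
  rewrite (vO_uniq u), (vO_uniq v), (hO_uniq k); unfold horiz_weq.
  now rewrite (hO_uniq (hid O)).
Qed.

Theorem propositionA1 (C D : SquaresCat) (F G : SqFunctor C D) :
  (forall eta : forall A : ob C, hom_v (fob F A) (fob G A),
      vert_nat F G eta -> forall A : ob C, vert_weq (eta A)) /\
  (forall eta : forall A : ob C, hom_h (fob F A) (fob G A),
      horiz_nat F G eta -> forall A : ob C, horiz_weq (eta A)).
Proof.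
  split; intros eta [eta_sq _] A.
  - exact (vert_weq_of_sq_from_O (fO F) (fO G) (eta_sq O A (hO A))).
  - exact (horiz_weq_of_sq_to_O (fO F) (fO G) (eta_sq A O (vO A))).
Qed.
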